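(* Let $\mathcal V$ be a finite alphabet, $\mathcal V^*$ the set of finite strings over $\mathcal V$, $e$ an environment, $p(t)$ a probability distribution on test suites $t\in\mathcal V^*$, and $p(c)$ a probability distribution on implementations $c\in\mathcal V^*$. Let $$\mathrm{sim}_{p,e}(c_1,c_2):=\mathbb E_{t\sim p}\Big[\tfrac{1}{|t|}\sum_{k=1}^{|t|}\mathbf 1\{O_k(c_1,t\mid e)=O_k(c_2,t\mid e)\}\Big],$$ fix $s\in\mathbb N$, set $\mathrm{sim}^s_{p,e}:=(\mathrm{sim}_{p,e})^s$, and for $c\in\mathcal V^*$ define $p(\mathcal N_c^s):=\sum_{c'\in\mathcal V^*}p(c')\,\mathrm{sim}^s_{p,e}(c,c')$. If $c,c'\in\mathcal V^*$ satisfy $\mathrm{sim}^s_{p,e}(c,c')\ge 1-\varepsilon$ for some $\varepsilon\in(0,1)$, then $$|p(\mathcal N_c^s)-p(\mathcal N_{c'}^s)|\le\sqrt{2\varepsilon}.$$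
   Context: A test suite $t\in\mathcal V^*$ consists of $|t|\ge1$ test cases. For an environment $e$, an implementation $c$ and a test suite $t$, the test harness returns a deterministic output vector $O(c,t\mid e)=(O_1(c,t\mid e),\dots,O_{|t|}(c,t\mid e))\in\mathbb O^{|t|}$ for a set $\mathbb O$ of possible test outputs. The quantity $p(\mathcal N_c^s)$ is the probability measure of the fuzzy neighborhood of $c$, i.e. the expected membership $\mathbb E_{c'\sim p}[\mathrm{sim}^s_{p,e}(c,c')]$. *)

From mathcomp Require Import all_boot all_order all_algebra.
From mathcomp Require Import all_classical all_reals.
From mathcomp Require Import ereal esum.
Set Implicit Arguments. Unset Strict Implicit. Unset Printing Implicit Defensive.
Import Order.TTheory GRing.Theory Num.Theory.
Local Open Scope ring_scope.
Local Open Scope classical_set_scope.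

Section Defs.
Variable R : realType.

Definition is_distr (T : choiceType) (p : T -> R) : Prop :=
  (forall x, 0 <= p x) /\ (\esum_(x in [set: T]) (p x)%:E = 1)%E.

Variables (V : finType) (Env : Type) (Out : eqType).
(* O e c t k : the k-th test output (0-based) of implementation c on test
   suite t in environment e; ntests t = |t|, the number of test cases. *)
Variables (O : Env -> seq V -> seq V -> nat -> Out) (ntests : seq V -> nat).
Variable e : Env.

Definition agree_frac (t c1 c2 : seq V) : R :=
  (ntests t)%:R^-1 * \sum_(k < ntests t) ((O e c1 t k == O e c2 t k) : nat)%:R.

Definition sim (pt : seq V -> R) (c1 c2 : seq V) : R :=
  fine (\esum_(t in [set: seq V]) (pt t * agree_frac t c1 c2)%:E).

Definition sim_pow (pt : seq V -> R) (s : nat) (c1 c2 : seq V) : R :=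
  sim pt c1 c2 ^+ s.

Definition nbhd_prob (pc pt : seq V -> R) (s : nat) (c : seq V) : R :=
  fine (\esum_(c' in [set: seq V]) (pc c' * sim_pow pt s c c')%:E).

End Defs.

From Pilot Require Import Defs.
From mathcomp Require Import all_boot all_order all_algebra.
From mathcomp Require Import all_classical all_reals.
From mathcomp Require Import ereal esum.
From mathcomp Require Import lra.
Set Implicit Arguments. Unset Strict Implicit. Unset Printing Implicit Defensive.
Import Order.TTheory GRing.Theory Num.Theory.
Local Open Scope ring_scope.
Local Open Scope classical_set_scope.

(* 1 - sim is a pseudometric: test case by test case, the disagreement
   indicators satisfy the triangle inequality, and averaging over test cases
   and over test suites preserves it.  For numbers in [0, 1], if
   b <= a + (1 - m) then b^s - a^s <= 1 - m^s, so replacing c by c' moves each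
   sim^s(., x) by at most 1 - sim^s(c, c') <= eps.  Averaging over x ~ p gives
   |p(N_c^s) - p(N_c'^s)| <= eps, which is at most sqrt(2 eps). *)

Lemma expr_increment_le (R : realDomainType) (s : nat) (x d : R) :
  0 <= x -> 0 <= d -> x + d <= 1 -> (x + d) ^+ s - x ^+ s <= 1 - (1 - d) ^+ s.
Proof.
move=> x0 d0 xd1; elim: s => [|s IH]; first by rewrite !expr0 subrr.
have incr_ge0 : 0 <= (x + d) ^+ s - x ^+ s.
  by rewrite subr_ge0 lerXn2r // ?nnegrE ?addr_ge0 // lerDl.
have x_le : x ^+ s <= (1 - d) ^+ s by rewrite lerXn2r // ?nnegrE //; lra.
have xs_ge0 : 0 <= x ^+ s by rewrite exprn_ge0.
have : (x + d) * ((x + d) ^+ s - x ^+ s) <= (x + d) ^+ s - x ^+ s.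
  by rewrite ler_piMl //; lra.
rewrite !exprS; nra.
Qed.

Lemma expr_sub_le (R : realDomainType) (s : nat) (a b m : R) :
  0 <= a -> 0 <= b <= 1 -> 0 <= m <= 1 -> b + m <= a + 1 ->
  b ^+ s - a ^+ s <= 1 - m ^+ s.
Proof.
move=> a0 /andP[b0 b1] /andP[m0 m1] bm.
have [ba|ab] := leP b a.
  have : b ^+ s <= a ^+ s by rewrite lerXn2r // nnegrE.
  have : m ^+ s <= 1 by rewrite exprn_ile1.
  lra.
have ba0 : 0 <= b - a by lra.
have := expr_increment_le s a0 ba0; rewrite addrCA subrr addr0 => /(_ b1).
have : m ^+ s <= (1 - (b - a)) ^+ s by rewrite lerXn2r // ?nnegrE //; lra.
lra.
Qed.

Lemma ler_sqrt_mul2 (R : rcfType) (x : R) : 0 <= x <= 2 -> x <= Num.sqrt (2 * x).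
Proof.
move=> /andP[x0 x2]; rewrite -[leLHS](ger0_norm x0) -sqrtr_sqr ler_sqrt ?mulr_ge0 //.
by rewrite expr2 ler_wpM2r.
Qed.

Lemma esumZ_le (R : realType) (T : choiceType) (k : R) (f : T -> R) :
  0 <= k -> (forall x, 0 <= f x) ->
  (\esum_(x in [set: T]) (k * f x)%:E <= k%:E * \esum_(x in [set: T]) (f x)%:E)%E.
Proof.
move=> k0 f0; apply: ge_ereal_sup => _ [X [finX _] <-].
rewrite (eq_fsbigr (fun x => k%:E * (f x)%:E)%E); last by move=> x _; rewrite EFinM.
rewrite -ge0_mule_fsumr; last by move=> x; rewrite lee_fin.
apply: lee_wpmul2l; first by rewrite lee_fin.
by apply: ereal_sup_ubound; exists X.
Qed.

Section Expectation.
Variables (R : realType) (T : choiceType) (p : T -> R).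
Hypothesis p_distr : is_distr p.

Definition expect (f : T -> R) : R :=
  fine (\esum_(x in [set: T]) (p x * f x)%:E).

Let p_ge0 x : 0 <= p x. Proof. by case: p_distr. Qed.

Let pmf_ge0 {f : T -> R} :
  (forall x, 0 <= f x <= 1) -> forall x, 0 <= p x * f x.
Proof. by move=> f01 x; rewrite mulr_ge0 //; case/andP: (f01 x). Qed.

Let esum_pmf_in01 (f : T -> R) : (forall x, 0 <= f x <= 1) ->
  (0 <= \esum_(x in [set: T]) (p x * f x)%:E <= 1)%E.
Proof.
move=> f01; apply/andP; split.
  by apply: esum_ge0 => x _; rewrite lee_fin (pmf_ge0 f01).
case: p_distr => _ <-; apply: le_esum => x _.
by rewrite lee_fin ler_piMr //; case/andP: (f01 x).
Qed.

Lemma expectE (f : T -> R) : (forall x, 0 <= f x <= 1) ->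
  \esum_(x in [set: T]) (p x * f x)%:E = (expect f)%:E.
Proof.
move=> /esum_pmf_in01/andP[ge0 le1].
by rewrite fineK // ge0_fin_numE ?(le_lt_trans le1) ?ltey.
Qed.

Lemma expect_in01 (f : T -> R) : (forall x, 0 <= f x <= 1) ->
  0 <= expect f <= 1.
Proof. by move=> f01; rewrite -!lee_fin -expectE ?esum_pmf_in01. Qed.

Lemma expect0 : expect (fun=> 0) = 0.
Proof. by rewrite /expect; under eq_esum do rewrite mulr0; rewrite esum1. Qed.

Lemma ler_expectD (f g h : T -> R) (k : R) :
  (forall x, 0 <= f x <= 1) -> (forall x, 0 <= g x <= 1) ->
  (forall x, 0 <= h x <= 1) -> 0 <= k ->
  (forall x, f x + g x <= h x + k) -> expect f + expect g <= expect h + k.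
Proof.
move=> f01 g01 h01 k0 fgh.
rewrite -lee_fin !EFinD -!expectE // -esumD; last 2 first.
- by move=> x _; rewrite lee_fin (pmf_ge0 f01).
- by move=> x _; rewrite lee_fin (pmf_ge0 g01).
have -> : k%:E = (k%:E * \esum_(x in [set: T]) (p x)%:E)%E.
  by case: p_distr => _ ->; rewrite mule1.
apply: le_trans _ (leeD2l _ (esumZ_le k0 p_ge0)).
rewrite -esumD; last 2 first.
- by move=> x _; rewrite lee_fin (pmf_ge0 h01).
- by move=> x _; rewrite lee_fin mulr_ge0.
apply: le_esum => x _; rewrite -!EFinD lee_fin [k * _]mulrC -!mulrDr.
exact: ler_wpM2l.
Qed.

Let ler_expect_addr (f g : T -> R) (k : R) :
  (forall x, 0 <= f x <= 1) -> (forall x, 0 <= g x <= 1) -> 0 <= k ->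
  (forall x, f x <= g x + k) -> expect f <= expect g + k.
Proof.
move=> f01 g01 k0 fg; rewrite -[expect f]addr0 -expect0.
by apply: ler_expectD => // x; rewrite ?addr0 ?lexx ?ler01.
Qed.

Lemma expect_dist_le (f g : T -> R) (k : R) :
  (forall x, 0 <= f x <= 1) -> (forall x, 0 <= g x <= 1) -> 0 <= k ->
  (forall x, `|f x - g x| <= k) -> `|expect f - expect g| <= k.
Proof.
move=> f01 g01 k0 fg.
have fg_le x : f x <= g x + k by move: (fg x); rewrite ler_norml; lra.
have gf_le x : g x <= f x + k by move: (fg x); rewrite ler_norml; lra.
have := ler_expect_addr f01 g01 k0 fg_le.
have := ler_expect_addr g01 f01 k0 gf_le.
rewrite ler_norml; lra.
Qed.

End Expectation.

Lemma eq_triangle (T : eqType) (x y z : T) :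
  ((y == z) + (x == y) <= (x == z) + 1)%N.
Proof. by case: (eqVneq x y) => [->|_]; case: (y == z) => //; case: (x == z). Qed.

Section Similarity.
Variables (R : realType) (V : finType) (Env : Type) (Out : eqType).
Variables (O : Env -> seq V -> seq V -> nat -> Out) (ntests : seq V -> nat).
Variables (e : Env) (pt : seq V -> R).
Hypothesis pt_distr : is_distr pt.

Local Notation agree t x y := (agree_frac R O ntests e t x y).
Local Notation sim := (sim O ntests e pt).
Local Notation sim_pow := (sim_pow O ntests e pt).

(* No positivity of ntests is needed: an empty test suite gives agreement 0. *)
Let inv_ntests_le1 t : (ntests t)%:R^-1 * (ntests t)%:R <= 1 :> R.
Proof.
have [->|n0] := eqVneq (ntests t) 0%N; first by rewrite invr0 mul0r ler01.
by rewrite mulVf ?pnatr_eq0.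
Qed.

Lemma agree_frac_in01 t x y : 0 <= agree t x y <= 1.
Proof.
rewrite /agree_frac mulr_ge0 ?invr_ge0 ?sumr_ge0 //=.
apply: le_trans _ (inv_ntests_le1 t); rewrite ler_wpM2l ?invr_ge0 //.
rewrite -[X in _ <= X%:R]card_ord -sumr_const; apply: ler_sum => k _.
by case: (_ == _).
Qed.

Lemma agree_fracC t x y : agree t x y = agree t y x.
Proof. by rewrite /agree_frac; under eq_bigr do rewrite eq_sym. Qed.

Lemma agree_frac_triangle t x y z : agree t y z + agree t x y <= agree t x z + 1.
Proof.
rewrite /agree_frac -mulrDr -big_split /=.
apply: le_trans _ (lerD (lexx _) (inv_ntests_le1 t)).
rewrite -mulrDr ler_wpM2l ?invr_ge0 //.
rewrite -[X in _ + X%:R]card_ord -sumr_const -big_split /=; apply: ler_sum => k _.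
by rewrite -natrD natr1 ler_nat -addn1 eq_triangle.
Qed.

Lemma simE x y : sim x y = expect pt (fun t => agree t x y).
Proof. by []. Qed.

Lemma sim_in01 x y : 0 <= sim x y <= 1.
Proof. by apply: expect_in01 => // t; apply: agree_frac_in01. Qed.

Lemma simC x y : sim x y = sim y x.
Proof. by rewrite !simE; under eq_fun do rewrite agree_fracC. Qed.

Lemma sim_triangle x y z : sim y z + sim x y <= sim x z + 1.
Proof.
rewrite !simE; apply: ler_expectD => // t;
  by rewrite ?agree_frac_in01 ?agree_frac_triangle.
Qed.

Lemma sim_pow_in01 s x y : 0 <= sim_pow s x y <= 1.
Proof.
by have /andP[s0 s1] := sim_in01 x y; rewrite /Defs.sim_pow exprn_ge0 ?exprn_ile1.
Qed.

Lemma sim_pow_dist s c c' x :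
  `|sim_pow s c x - sim_pow s c' x| <= 1 - sim_pow s c c'.
Proof.
have [a0 _] := andP (sim_in01 c x); have [b0 _] := andP (sim_in01 c' x).
have tri := sim_triangle c c' x.
have tri' := sim_triangle c' c x; rewrite (simC c' c) in tri'.
have := expr_sub_le s a0 (sim_in01 c' x) (sim_in01 c c') tri.
have := expr_sub_le s b0 (sim_in01 c x) (sim_in01 c c') tri'.
rewrite /Defs.sim_pow ler_norml; lra.
Qed.

Lemma nbhd_prob_dist (pc : seq V -> R) (pc_distr : is_distr pc) s c c' :
  `|nbhd_prob O ntests e pc pt s c - nbhd_prob O ntests e pc pt s c'|
    <= 1 - sim_pow s c c'.
Proof.
apply: (expect_dist_le pc_distr) => [x|x||x].
- exact: sim_pow_in01.
- exact: sim_pow_in01.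
- by rewrite subr_ge0; case/andP: (sim_pow_in01 s c c').
- exact: sim_pow_dist.
Qed.

End Similarity.

Theorem theorem4p10 (R : realType) (V : finType) (Env : Type) (Out : eqType)
  (O : Env -> seq V -> seq V -> nat -> Out) (ntests : seq V -> nat) (e : Env)
  (Hn : forall t, (0 < ntests t)%N)
  (pt pc : seq V -> R) (Hpt : is_distr pt) (Hpc : is_distr pc)
  (s : nat) (c c' : seq V) (eps : R) (Heps0 : 0 < eps) (Heps1 : eps < 1)
  (Hsim : 1 - eps <= sim_pow O ntests e pt s c c') :
  `|nbhd_prob O ntests e pc pt s c - nbhd_prob O ntests e pc pt s c'|
    <= Num.sqrt (2 * eps).
Proof.
apply: le_trans (nbhd_prob_dist O ntests e Hpt Hpc s c c') _.
have eps_le : eps <= Num.sqrt (2 * eps) by apply: ler_sqrt_mul2; lra.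
lra.
Qed.
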